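(* For a simplicial set $S$, the conjunction of all Kan conditions $\mathrm{Kan}_p[n]$ for $1\le n\le 2$, $0\le p\le n$, is equivalent to the conjunction of all Beck–Chevalley conditions $\mathrm{BC}_{p,q}[n]$ for $n\le 2$ (that is, $\mathrm{BC}_{0,1}[2]$, $\mathrm{BC}_{0,2}[2]$, $\mathrm{BC}_{1,2}[2]$).
   Context: The Kan condition $\mathrm{Kan}_p[n]$ ($n>0$, $0\le p\le n$) on $S$: for any $(n-1)$-simplices $c_0,\dots,c_{p-1},c_{p+1},\dots,c_n$ of $S$ with $d_ic_j=d_{j-1}c_i$ for all $0\le i<j\le n$ with $p\notin\{i,j\}$, there exists an $n$-simplex $x$ with $d_ix=c_i$ for all $i\ne p$. The Beck–Chevalley condition $\mathrm{BC}_{p,q}[n]$ ($n>1$, $0\le p<q\le n$): for any $(n-1)$-simplices $c_p,c_q$ of $S$ with $d_pc_q=d_{q-1}c_p$ there exists an $n$-simplex $x$ with $d_px=c_p$ and $d_qx=c_q$. *)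

From mathcomp Require Import all_boot.
Set Implicit Arguments. Unset Strict Implicit. Unset Printing Implicit Defensive.

(* Face/degeneracy with out-of-range index are arbitrary (unconstrained). *)
Record sSet := SSet {
  simp : nat -> Type;
  face : forall n, nat -> simp n.+1 -> simp n;
  degen : forall n, nat -> simp n -> simp n.+1;
  dd : forall n i j (x : simp n.+2), i < j -> j <= n.+2 ->
         face i (face j x) = face j.-1 (face i x);
  ss : forall n i j (x : simp n), i <= j -> j <= n ->
         degen i (degen j x) = degen j.+1 (degen i x);
  ds_lt : forall n i j (x : simp n.+1), i < j -> j <= n.+1 ->
         face i (degen j x) = degen j.-1 (face i x);
  ds_eq : forall n j (x : simp n), j <= n -> face j (degen j x) = x;
  ds_eq1 : forall n j (x : simp n), j <= n -> face j.+1 (degen j x) = x;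
  ds_gt : forall n i j (x : simp n.+1), j.+1 < i -> i <= n.+2 ->
         face i (degen j x) = degen j (face i.-1 x)
}.

Definition horn_compat (S : sSet) (p m : nat) : (nat -> simp S m) -> Prop :=
  match m with
  | 0 => fun _ => True
  | k.+1 => fun c => forall i j, i < j -> j <= k.+2 -> i != p -> j != p ->
              face i (c j) = face j.-1 (c i)
  end.

(* Kan_p[n] for n > 0 (here n = m+1, simplices c_i of dimension m = n-1) *)
Definition Kan (S : sSet) (p n : nat) : Prop :=
  match n with
  | 0 => True
  | m.+1 => forall c : nat -> simp S m, horn_compat p c ->
      exists x : simp S m.+1, forall i, i <= m.+1 -> i != p -> face i x = c i
  end.

Definition BC (S : sSet) (p q n : nat) : Prop :=
  match n with
  | k.+2 => forall cp cq : simp S k.+1, face p cq = face q.-1 cp ->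
      exists x : simp S k.+2, face p x = cp /\ face q x = cq
  | _ => True
  end.

From mathcomp Require Import all_boot zify.

Set Implicit Arguments.
Unset Strict Implicit.

(* A 1-horn is a single vertex, filled by its degenerate edge; a 2-horn missing
   the face [3 - i - j] consists of exactly the two faces [i < j] that
   Beck-Chevalley prescribes, and its compatibility condition is the single
   equation [d_i c_j = d_(j-1) c_i]. *)

Lemma Kan_dim1 (S : sSet) p : p <= 1 -> Kan S p 1.
Proof.
case: p => [|[|//]] _ c _.
- by exists (degen 0 (c 1)) => -[|[|i]] //= _ _; exact: (ds_eq1 (n:=0)).
- by exists (degen 0 (c 0)) => -[|[|i]] //= _ _; exact: (ds_eq (n:=0)).
Qed.

Section Horn2.

Variables (i j : nat).
Hypotheses (lt_ij : i < j) (le_j2 : j <= 2).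

Let p := 3 - i - j.

Lemma horn2_faces k : k <= 2 -> k != p -> k = i \/ k = j.
Proof. by rewrite /p; lia. Qed.

Lemma horn2_edge k l :
  k < l -> l <= 2 -> k != p -> l != p -> k = i /\ l = j.
Proof. by rewrite /p; lia. Qed.

Lemma horn2_compatE (S : sSet) (c : nat -> simp S 1) :
  horn_compat p c <-> face i (c j) = face j.-1 (c i).
Proof.
split=> [compat | E k l lt_kl le_l2 kp lp].
- by apply: compat => //; rewrite /p; lia.
by have [-> ->] := horn2_edge lt_kl le_l2 kp lp.
Qed.

Lemma Kan2_BC (S : sSet) : Kan S p 2 <-> BC S i j 2.
Proof.
have ip : i != p by rewrite /p; lia.
have jp : j != p by rewrite /p; lia.
split=> [KanS cp cq E | BCS c /horn2_compatE E].
- pose c k := if k == i then cp else cq.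
  have /KanS [x fx] : horn_compat p c.
    by apply/horn2_compatE; rewrite /c eqxx (gtn_eqF lt_ij).
  by exists x; rewrite !fx ?(leq_trans (ltnW lt_ij)) // /c eqxx (gtn_eqF lt_ij).
- have [x [fxi fxj]] := BCS _ _ E.
  by exists x => k le_k2 kp; have [-> | ->] := horn2_faces le_k2 kp.
Qed.

End Horn2.

Theorem mainTheorem4 (S : sSet) :
  (forall n p, 1 <= n -> n <= 2 -> p <= n -> Kan S p n) <->
  (forall p q, p < q -> q <= 2 -> BC S p q 2).
Proof.
split=> [KanS i j lt_ij le_j2 | BCS [|[|[|n]]] p // _ _ le_pn].
- by apply/(Kan2_BC lt_ij le_j2)/KanS => //; lia.
- exact: Kan_dim1.
- case: p le_pn => [|[|[|//]]] _.
  + exact/(Kan2_BC (i:=1) (j:=2))/BCS.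
  + exact/(Kan2_BC (i:=0) (j:=2))/BCS.
  + exact/(Kan2_BC (i:=0) (j:=1))/BCS.
Qed.
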